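(* Let $A\in\{0,1\}$ be a binary exposure and $M_1,\dots,M_K$ binary mediators ($K\ge 1$) whose causal dependencies among themselves form an arbitrary directed acyclic graph $G$. For each mediator $M_k$ and each $a\in\{0,1\}$ let $M_k(a)\in\{0,1\}$ denote its potential value, defined recursively by $M_k(a)=M_k\big(a,\mathrm{Pa}\{M_k\}(a)\big)$, where $\mathrm{Pa}\{M_k\}(a)=\{M_j(a)\}_{j\in \text{parents of }M_k\text{ in }G}$. Let $Y(a,m_1,\dots,m_K)$ denote the (real-valued) potential outcome when $A$ is set to $a$ and the mediators to $m_1,\dots,m_K$, and write $Y(a)=Y\big(a,M_1(a),\dots,M_K(a)\big)$, $\mathrm{TE}=Y(1)-Y(0)$. For $k=1,\dots,K$ and $a,m\in\{0,1\}$ define $$Y_k(a,m)=Y\big(a,M_1(a),\dots,M_{k-1}(a),m,M_{k+1}(a),\dots,M_K(a)\big),$$ $$\mathrm{CDE}_k(0)=Y_k(1,0)-Y_k(0,0),\quad \mathrm{CIE}_k(a)=Y_k(a,1)-Y_k(a,0),\quad \mathrm{sCIE}_k=M_k(1)\,\mathrm{CIE}_k(1)-M_k(0)\,\mathrm{CIE}_k(0).$$ Then $$\mathrm{TE}=\frac{1}{K}\sum_{k=1}^K \mathrm{CDE}_k(0)+\frac{1}{K}\sum_{k=1}^K \mathrm{sCIE}_k .$$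
   Context: Potential-outcomes framework for mediation analysis with binary exposure and binary mediators; $\mathrm{CDE}_k(0)$ is the controlled direct effect, $\mathrm{CIE}_k(a)$ the controlled indirect effect, and $\mathrm{sCIE}_k$ the scaled controlled indirect effect of the $k$-th mediator. *)

From mathcomp Require Import all_boot all_order all_algebra.
Set Implicit Arguments. Unset Strict Implicit. Unset Printing Implicit Defensive.
Import Order.TTheory GRing.Theory Num.Theory.
Local Open Scope ring_scope.

(* The mediator DAG G on K mediators, given by its edge relation
   [par j k] = "M_j is a parent of M_k".  Acyclic: no edge j -> k with a
   directed path back from k to j. *)
Definition acyclic (K : nat) (par : rel 'I_K) : Prop :=
  forall j k : 'I_K, par j k -> ~~ connect par k j.

Definition depends_on_parents (K : nat) (par : rel 'I_K)
  (f : 'I_K -> bool -> ('I_K -> bool) -> bool) : Prop :=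
  forall (k : 'I_K) (a : bool) (m m' : 'I_K -> bool),
    (forall j, par j k -> m j = m' j) -> f k a m = f k a m'.

(* M_k(a) = M_k(a, Pa{M_k}(a)) : the potential mediator values Mpot a
   satisfy the recursive (structural) definition. *)
Definition potential_mediators (K : nat)
  (f : 'I_K -> bool -> ('I_K -> bool) -> bool) (Mpot : bool -> 'I_K -> bool)
  : Prop :=
  forall (a : bool) (k : 'I_K), Mpot a k = f k a (Mpot a).

Section PO.
Variables (R : realFieldType) (K : nat).
Variable Y : bool -> ('I_K -> bool) -> R.
Variable Mpot : bool -> 'I_K -> bool.

Definition Ytot (a : bool) : R := Y a (Mpot a).
Definition TE : R := Ytot true - Ytot false.

Definition Yk (k : 'I_K) (a m : bool) : R :=
  Y a (fun j => if j == k then m else Mpot a j).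

Definition CDE0 (k : 'I_K) : R := Yk k true false - Yk k false false.
Definition CIE (k : 'I_K) (a : bool) : R := Yk k a true - Yk k a false.
Definition sCIE (k : 'I_K) : R :=
  (Mpot true k)%:R * CIE k true - (Mpot false k)%:R * CIE k false.
End PO.

From mathcomp Require Import all_boot all_order all_algebra.
From Stdlib Require Import FunctionalExtensionality.
From mathcomp Require Import ring.
Import Order.TTheory GRing.Theory Num.Theory.
Local Open Scope ring_scope.

(* The decomposition holds mediator by mediator: setting M_k to its own
   potential value M_k(a) gives back Y(a), so whichever values M_k(0), M_k(1)
   take, CDE_k(0) + sCIE_k telescopes to Y_k(1, M_k(1)) - Y_k(0, M_k(0)) = TE.
   Averaging over k gives the theorem. *)

Section PerMediator.
Variables (R : realFieldType) (K : nat).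
Variables (Y : bool -> ('I_K -> bool) -> R) (Mpot : bool -> 'I_K -> bool).

Lemma Yk_Mpot (k : 'I_K) (a : bool) : Yk Y Mpot k a (Mpot a k) = Ytot Y Mpot a.
Proof.
rewrite /Yk /Ytot; congr (Y a _); apply: functional_extensionality => j.
by case: eqP => // ->.
Qed.

Lemma CDE0_add_sCIE (k : 'I_K) : CDE0 Y Mpot k + sCIE Y Mpot k = TE Y Mpot.
Proof.
rewrite /TE -!(Yk_Mpot k) /CDE0 /sCIE /CIE.
by case: (Mpot true k); case: (Mpot false k); rewrite /= ?mul1r ?mul0r; ring.
Qed.

End PerMediator.

Theorem corollary1 (R : realFieldType) (K : nat) (hK : (0 < K)%N)
  (par : rel 'I_K) (hG : acyclic par)
  (f : 'I_K -> bool -> ('I_K -> bool) -> bool)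
  (hf : depends_on_parents par f)
  (Mpot : bool -> 'I_K -> bool) (hM : potential_mediators f Mpot)
  (Y : bool -> ('I_K -> bool) -> R) :
  TE Y Mpot =
    (K%:R)^-1 * \sum_(k < K) CDE0 Y Mpot k
    + (K%:R)^-1 * \sum_(k < K) sCIE Y Mpot k.
Proof.
rewrite -mulrDr -big_split /=.
under eq_bigr => k _ do rewrite CDE0_add_sCIE.
have K_neq0 : (K%:R : R) != 0 by rewrite pnatr_eq0 -lt0n.
by rewrite sumr_const card_ord -(mulr_natr (TE Y Mpot)) mulrC mulfK.
Qed.
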